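(* Let $C_n$ denote the cycle on $n \geq 3$ vertices. Then $\Gamma_b(C_3) = 1$, and for $n > 3$, \[ \Gamma_b(C_n) = \begin{cases} n-2 & \text{if } n \text{ is even},\\ n-3 & \text{if } n \text{ is odd}.\end{cases} \]
   Context: Let $G=(V,E)$ be a finite connected graph with distance $d(u,v)$. The eccentricity of $v$ is $e(v)=\max_{w\in V} d(v,w)$ and $\mathrm{diam}(G)=\max_v e(v)$. A broadcast on $G$ is a function $f: V \to \{0,1,\dots,\mathrm{diam}(G)\}$ with $f(v) \leq e(v)$ for all $v$; its cost is $\sum_{v\in V} f(v)$. The broadcast $f$ is dominating if for every $u \in V$ there is $v$ with $f(v)\geq 1$ and $d(u,v) \leq f(v)$. A dominating broadcast $f$ is minimal if decreasing the value $f(v)$ of any vertex $v$ with $f(v)>0$ yields a broadcast that is not dominating. The upper broadcast domination number $\Gamma_b(G)$ is the maximum cost of a minimal dominating broadcast on $G$. *)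

From mathcomp Require Import all_boot all_order.
Set Implicit Arguments. Unset Strict Implicit. Unset Printing Implicit Defensive.

Section Graphs.
Variable T : finType.
Variable e : rel T.

Fixpoint ball (u : T) (k : nat) : {set T} :=
  match k with
  | 0 => [set u]
  | k'.+1 => ball u k' :|: [set y | [exists x in ball u k', e x y]]
  end.

(* graph distance: least k with v in ball u k (every distance in a connected
   graph on #|T| vertices is < #|T|) *)
Definition dist (u v : T) : nat := find (fun k => v \in ball u k) (iota 0 #|T|).

Definition connected_graph : Prop := forall u v : T, exists k, v \in ball u k.

Definition ecc (v : T) : nat := \max_(w : T) dist v w.
Definition diam : nat := \max_(v : T) ecc v.

Definition broadcast (f : T -> nat) : Prop := forall v, f v <= ecc v.

Definition cost (f : T -> nat) : nat := \sum_(v : T) f v.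

Definition dominating (f : T -> nat) : Prop :=
  forall u : T, exists v : T, 1 <= f v /\ dist u v <= f v.

Definition decr (f : T -> nat) (v : T) : T -> nat :=
  fun w => if w == v then (f v).-1 else f w.

Definition minimal_dominating_broadcast (f : T -> nat) : Prop :=
  [/\ broadcast f, dominating f &
      forall v, 0 < f v -> ~ dominating (decr f v)].

Definition is_upper_broadcast_number (g : nat) : Prop :=
  (exists f, minimal_dominating_broadcast f /\ cost f = g) /\
  (forall f, minimal_dominating_broadcast f -> cost f <= g).

End Graphs.

Definition cycle_rel (n : nat) : rel 'I_n :=
  fun i j => (nat_of_ord j == (i.+1) %% n) || (nat_of_ord i == (j.+1) %% n).
Arguments cycle_rel n : clear implicits.

From mathcomp Require Import all_boot all_order zify.
From Stdlib Require Import ZArith.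
Set Implicit Arguments. Unset Strict Implicit. Unset Printing Implicit Defensive.

(* A dominating broadcast is minimal iff every broadcaster v has a private
   vertex, one that hears v and no other broadcaster.  On C_n the vertices
   hearing v form an arc of 2 f(v) + 1 vertices, and no vertex lies on three
   arcs that each have a private vertex: lifted to Z around that vertex, three
   intervals through 0 cannot each stick out beyond the other two.  Counting
   the pairs (vertex, broadcaster it hears), a private vertex contributing one
   pair, gives 2 cost + |V+| <= 2n - |V+|, hence cost <= n - 3 once there are
   three broadcasters.  With two broadcasters, the private vertex of one is
   too far from the other, so both strengths are < n/2; a lone broadcaster has
   strength <= e(v) = n/2.  The bound 2 (n/2) - 2 is attained by two
   broadcasts of strength n/2 - 1 from the vertices 0 and 1 (n even) or 0 and
   2 (n odd); on C_3 by a single broadcast of strength 1. *)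

Lemma card_sum_mem (T : finType) (A : {pred T}) : #|A| = \sum_x (x \in A).
Proof. by rewrite -sum1_card big_mkcond /=; apply: eq_bigr => x _; case: (x \in A). Qed.

Section Broadcasts.
Variables (T : finType) (e : rel T).
Implicit Types (f : T -> nat) (u v w : T).

Definition hears f u v : bool := (0 < f v) && (dist e u v <= f v).
Definition heard f u : {set T} := [set v | hears f u v].
Definition hearers f v : {set T} := [set u | hears f u v].
Definition broadcasters f : {set T} := [set v | 0 < f v].

Lemma dist_le_ecc v w : dist e v w <= ecc e v.
Proof. exact: (leq_bigmax (F := dist e v)). Qed.

Lemma cost_broadcasters f : cost f = \sum_(v in broadcasters f) f v.
Proof.
rewrite /cost [RHS]big_mkcond; apply: eq_bigr => v _.
by rewrite inE; case: posnP.
Qed.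

Lemma cost_le_card_broadcasters f D :
  {in broadcasters f, forall v, f v <= D} -> cost f <= #|broadcasters f| * D.
Proof. by move=> f_le; rewrite cost_broadcasters -sum_nat_const leq_sum. Qed.

Lemma decr_not_dominating f v u :
  dist e u v = f v -> heard f u \subset [set v] -> ~ dominating e (decr f v).
Proof.
move=> duv /subsetP heard_v /(_ u) [w []]; rewrite /decr.
case: eqVneq => [-> | wv] w_pos dw; first by lia.
have : w \in heard f u by rewrite inE /hears; lia.
by move/heard_v; rewrite inE (negbTE wv).
Qed.

Lemma minimal_of_boundary_private f :
  broadcast e f -> dominating e f ->
  (forall v, 0 < f v -> exists u, dist e u v = f v /\ heard f u \subset [set v]) ->
  minimal_dominating_broadcast e f.
Proof.
move=> bf dom priv; split=> // v /priv [u [duv heard_u]].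
exact: decr_not_dominating duv heard_u.
Qed.

Lemma private_of_minimal f v :
  dominating e f -> ~ dominating e (decr f v) -> exists u, heard f u = [set v].
Proof.
move=> dom ndom; have [u /eqP|not_private] := pickP (fun u => heard f u == [set v]).
  by exists u.
case: ndom => u; have [w [w_pos dw]] := dom u.
case: (eqVneq w v) w_pos dw => [-> v_pos dv | wv w_pos dw]; last first.
  by exists w; rewrite /decr (negbTE wv).
have v_heard : v \in heard f u by rewrite inE /hears; lia.
have [w' ] : exists w', w' \in heard f u :\ v.
  apply/set0Pn; apply: contraFneq (not_private u) => hv.
  by rewrite -(setD1K v_heard) hv setU0.
rewrite !inE => /andP [w'v /andP [w'_pos dw']].
by exists w'; rewrite /decr (negbTE w'v).
Qed.

Lemma minimal_lt_dist f v w :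
  minimal_dominating_broadcast e f -> 0 < f v -> 0 < f w -> v != w ->
  exists u, f v < dist e u v.
Proof.
move=> [_ dom min] fv fw vw; have [u hu] := private_of_minimal dom (min w fw).
exists u; have : v \notin heard f u by rewrite hu in_set1.
by rewrite inE /hears fv -ltnNge.
Qed.

Lemma sum_card_hearers f :
  \sum_(v in broadcasters f) #|hearers f v| = \sum_u #|heard f u|.
Proof.
have -> : \sum_(v in broadcasters f) #|hearers f v| = \sum_v #|hearers f v|.
  rewrite [RHS](bigID (mem (broadcasters f))) /= [X in _ = _ + X]big1 ?addn0 // => v.
  rewrite inE -eqn0Ngt => /eqP fv; apply/eqP; rewrite cards_eq0; apply/eqP.
  by apply/setP => u; rewrite !inE /hears fv.
rewrite (eq_bigr _ (fun v _ => card_sum_mem (hearers f v))) exchange_big.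
by apply: eq_bigr => u _; rewrite card_sum_mem; apply: eq_bigr => v _; rewrite !inE.
Qed.

Lemma card_broadcasters_le_private f :
  minimal_dominating_broadcast e f ->
  #|broadcasters f| <= #|[set u | #|heard f u| == 1]|.
Proof.
move=> [_ dom min].
pose heard_one u := odflt u [pick v in heard f u].
apply: leq_trans (leq_imset_card heard_one _); apply: subset_leq_card.
apply/subsetP => v; rewrite inE => fv.
have [u hu] := private_of_minimal dom (min v fv).
apply/imsetP; exists u; first by rewrite inE hu cards1.
rewrite /heard_one hu; case: pickP => [w|/(_ v)]; rewrite inE ?eqxx //.
by move/eqP.
Qed.

Lemma sum_card_hearers_le f :
  minimal_dominating_broadcast e f -> (forall u, #|heard f u| <= 2) ->
  \sum_(v in broadcasters f) #|hearers f v| + #|broadcasters f| <= 2 * #|T|.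
Proof.
move=> minf heard_le2; rewrite sum_card_hearers.
apply: leq_trans (leq_add (leqnn _) (card_broadcasters_le_private minf)) _.
rewrite card_sum_mem -big_split /= mulnC -sum_nat_const.
by apply: leq_sum => u _; rewrite inE; have := heard_le2 u; case: eqP => [->|]; lia.
Qed.

Lemma cost_add_card_broadcasters_le f :
  minimal_dominating_broadcast e f -> (forall u, #|heard f u| <= 2) ->
  {in broadcasters f, forall v, (f v).*2.+1 <= #|hearers f v|} ->
  cost f + #|broadcasters f| <= #|T|.
Proof.
move=> minf heard_le2 hearers_ge; have := sum_card_hearers_le minf heard_le2.
have : \sum_(v in broadcasters f) (f v + f v + 1)
         <= \sum_(v in broadcasters f) #|hearers f v|.
  by apply: leq_sum => v /hearers_ge; rewrite addnn addn1.
rewrite !big_split /= sum1_card -cost_broadcasters; lia.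
Qed.

Lemma single_broadcast_minimal v :
  (forall u, dist e u v = dist e v u) -> 0 < ecc e v ->
  let f := fun w => if w == v then ecc e v else 0 in
  minimal_dominating_broadcast e f /\ cost f = ecc e v.
Proof.
move=> dist_sym ecc_pos f; split; last by rewrite /cost -big_mkcond big_pred1_eq.
apply: minimal_of_boundary_private.
- by move=> w; rewrite /f; case: eqP => [->|].
- by move=> u; exists v; rewrite /f eqxx dist_sym dist_le_ecc.
- move=> w; rewrite /f; case: eqP => [-> _|//].
  have [x ecc_x] : {x | ecc e v = dist e v x} by apply: eq_bigmax; apply/card_gt0P; exists v.
  exists x; split; first by rewrite dist_sym.
  by apply/subsetP => y; rewrite !inE /hears /f; case: eqP.
Qed.

End Broadcasts.

Section Cycle.
Variable n : nat.
Local Notation C := (cycle_rel n).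

(* [a - b + (b - a)] is [|a - b|] in truncated arithmetic. *)
Definition cdist (a b : nat) : nat := minn (a - b + (b - a)) (n - (a - b + (b - a))).

Lemma cdist_sym a b : cdist a b = cdist b a.
Proof. rewrite /cdist; lia. Qed.

Lemma cdist_triangle a b c :
  a < n -> b < n -> c < n -> cdist a c <= cdist a b + cdist b c.
Proof. rewrite /cdist; lia. Qed.

Lemma cdist_le_half a b : a < n -> b < n -> cdist a b <= n./2.
Proof. rewrite /cdist; lia. Qed.

Lemma modn_lt_double c :
  c < n.*2 -> (c < n /\ c %% n = c) \/ (n <= c /\ c %% n = c - n).
Proof.
case: (ltnP c n) => [lt_cn _ | le_nc lt_c2n]; first by left; rewrite modn_small.
right; split => //; rewrite -{1}(subnK le_nc) modnDr modn_small //; lia.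
Qed.

Lemma val_ordS (x : 'I_n) : nat_of_ord (ordS x) = if x.+1 == n then 0 else x.+1.
Proof.
have := ltn_ord x; rewrite /= leq_eqVlt => /orP [/eqP -> | lt_xn].
  by rewrite modnn eqxx.
by rewrite modn_small // ltn_eqF.
Qed.

Lemma cycle_relE (x y : 'I_n) : C x y = (y == ordS x) || (x == ordS y).
Proof. by []. Qed.

Lemma cdist_adj (x y : 'I_n) : C x y -> cdist x y <= 1.
Proof.
rewrite cycle_relE => /orP [] /eqP ->; rewrite /cdist val_ordS.
  by have := ltn_ord x; case: eqP; lia.
by have := ltn_ord y; case: eqP; lia.
Qed.

Lemma cdist_neighbor (a b : 'I_n) k :
  cdist a b = k.+1 -> cdist a (ordS b) <= k \/ cdist a (ord_pred b) <= k.
Proof.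
have := ltn_ord a; have := ltn_ord b; have := ltn_ord (ord_pred b).
move: (congr1 (@nat_of_ord n) (ord_predK b)) (val_ordS b); rewrite val_ordS /cdist.
by do 2 case: ifP => /eqP; lia.
Qed.

Lemma ball_cycle (a : 'I_n) k : ball C a k = [set b : 'I_n | cdist a b <= k].
Proof.
elim: k => [|k IH]; apply/setP => b; rewrite inE /=.
  by rewrite in_set1 -val_eqE /= /cdist; have := ltn_ord a; have := ltn_ord b; lia.
rewrite in_setU IH !inE.
apply/idP/idP => [/orP [|/existsP [x /andP [/[!inE] xa xb]]] | d_le].
- lia.
- have := cdist_triangle (ltn_ord a) (ltn_ord x) (ltn_ord b).
  have := cdist_adj xb; lia.
- apply/orP; case: (leqP (cdist a b) k) => [|d_gt]; [by left | right; apply/existsP].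
  have [near|near] := @cdist_neighbor a b k ltac:(lia).
    by exists (ordS b); rewrite inE near cycle_relE eqxx orbT.
  by exists (ord_pred b); rewrite inE near cycle_relE ord_predK eqxx.
Qed.

Lemma find_leq_iota c m : c < m -> find (leq c) (iota 0 m) = c.
Proof.
move=> lt_cm; rewrite -(subnKC (ltnW lt_cm)) iotaD find_cat size_iota.
have -> : has (leq c) (iota 0 c) = false by apply/hasPn => k; rewrite mem_iota; lia.
have : 0 < m - c by rewrite subn_gt0.
by case: (m - c) => //= p _; rewrite leqnn addn0.
Qed.

Lemma dist_cycle (a b : 'I_n) : dist C a b = cdist a b.
Proof.
rewrite /dist card_ord (eq_find (a2 := leq (cdist a b))) => [|k].
  by apply: find_leq_iota; have := ltn_ord a; have := ltn_ord b; rewrite /cdist; lia.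
by rewrite ball_cycle inE.
Qed.

Lemma ecc_cycle (v : 'I_n) : ecc C v = n./2.
Proof.
have lt_vn := ltn_ord v; apply/eqP; rewrite eqn_leq; apply/andP; split.
  by apply/bigmax_leqP => w _; rewrite dist_cycle cdist_le_half.
pose w : 'I_n := Ordinal (ltn_pmod (v + n./2) (leq_ltn_trans (leq0n v) lt_vn)).
apply: leq_trans (dist_le_ecc _ v w); rewrite dist_cycle /cdist /=.
have := @modn_lt_double (v + n./2) ltac:(lia); lia.
Qed.

Lemma cdist_le_lift (a b : 'I_n) k :
  cdist a b <= k ->
  exists z q : Z, (Z.abs z <= Z.of_nat k)%Z /\ Z.of_nat b = (Z.of_nat a + z + q * Z.of_nat n)%Z.
Proof.
have := ltn_ord a; have := ltn_ord b; rewrite /cdist => lt_bn lt_an d_le.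
case: (leqP (a - b + (b - a)) k) => [short|long].
  by exists (Z.of_nat b - Z.of_nat a)%Z, 0%Z; lia.
case: (leqP a b) => ab.
  by exists (Z.of_nat b - Z.of_nat a - Z.of_nat n)%Z, 1%Z; lia.
by exists (Z.of_nat b - Z.of_nat a + Z.of_nat n)%Z, (-1)%Z; lia.
Qed.

Lemma cdist_gt_lift (u a b : 'I_n) k (za zb qa qb : Z) :
  k < cdist a b ->
  Z.of_nat a = (Z.of_nat u + za + qa * Z.of_nat n)%Z ->
  Z.of_nat b = (Z.of_nat u + zb + qb * Z.of_nat n)%Z ->
  (Z.of_nat k < Z.abs (zb - za))%Z.
Proof.
have := ltn_ord a; have := ltn_ord b; rewrite /cdist => lt_bn lt_an d_gt ea eb.
have [q_neg|[q0|q_pos]] := Z.lt_trichotomy (qb - qa) 0.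
- have : ((qb - qa) * Z.of_nat n <= - Z.of_nat n)%Z by nia.
  lia.
- lia.
- have : ((qb - qa) * Z.of_nat n >= Z.of_nat n)%Z by nia.
  lia.
Qed.

Lemma no_three_private_intervals (s1 s2 s3 x1 x2 x3 r1 r2 r3 : Z) :
  (Z.abs s1 <= r1)%Z -> (Z.abs s2 <= r2)%Z -> (Z.abs s3 <= r3)%Z ->
  (Z.abs (x1 - s1) <= r1)%Z -> (Z.abs (x2 - s2) <= r2)%Z -> (Z.abs (x3 - s3) <= r3)%Z ->
  (r2 < Z.abs (s2 - x1))%Z -> (r3 < Z.abs (s3 - x1))%Z ->
  (r1 < Z.abs (s1 - x2))%Z -> (r3 < Z.abs (s3 - x2))%Z ->
  (r1 < Z.abs (s1 - x3))%Z -> (r2 < Z.abs (s2 - x3))%Z -> False.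
Proof. lia. Qed.

Lemma card_private_arcs_le2 (u : 'I_n) (A : {set 'I_n}) (r : 'I_n -> nat) :
  {in A, forall w : 'I_n, cdist u w <= r w} ->
  {in A, forall w : 'I_n, exists p : 'I_n,
     {in A, forall w' : 'I_n, (cdist p w' <= r w') = (w' == w)}} ->
  #|A| <= 2.
Proof.
move=> near priv; rewrite leqNgt; apply/negP.
move=> /card_gt2P [x [y [z [[xA yA zA] [xy yz zx]]]]].
(* Offsets from [u]: [w] sits at [s] and its private vertex [p] at [t]. *)
have lift (w : 'I_n) : w \in A -> exists (p : 'I_n) (s t a b : Z),
    [/\ (Z.abs s <= Z.of_nat (r w))%Z, (Z.abs (t - s) <= Z.of_nat (r w))%Z,
        Z.of_nat w = (Z.of_nat u + s + a * Z.of_nat n)%Z,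
        Z.of_nat p = (Z.of_nat u + t + b * Z.of_nat n)%Z &
        {in A, forall w' : 'I_n, w' != w -> r w' < cdist p w'}].
  move=> wA; have [p Pp] := priv w wA.
  have [s [a [s_le ew]]] := cdist_le_lift (near w wA).
  have [d [b [d_le ew']]] : exists d b : Z, (Z.abs d <= Z.of_nat (r w))%Z /\
      Z.of_nat w = (Z.of_nat p + d + b * Z.of_nat n)%Z.
    by apply: cdist_le_lift; rewrite Pp ?eqxx.
  exists p, s, (s - d)%Z, a, (a - b)%Z; split; try lia.
  by move=> w' w'A w'w; rewrite ltnNge Pp // (negbTE w'w).
have [px [sx [tx [ax [bx [sx_le tx_le ex epx farx]]]]]] := lift x xA.
have [py [sy [ty [ay [by_ [sy_le ty_le ey epy fary]]]]]] := lift y yA.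
have [pz [sz [tz [az [bz [sz_le tz_le ez epz farz]]]]]] := lift z zA.
apply: (no_three_private_intervals sx_le sy_le sz_le tx_le ty_le tz_le).
- by apply: (cdist_gt_lift (farx y yA _) epx ey); rewrite eq_sym.
- exact: (cdist_gt_lift (farx z zA zx) epx ez).
- exact: (cdist_gt_lift (fary x xA xy) epy ex).
- by apply: (cdist_gt_lift (fary z zA _) epy ez); rewrite eq_sym.
- by apply: (cdist_gt_lift (farz x xA _) epz ex); rewrite eq_sym.
- exact: (cdist_gt_lift (farz y yA yz) epz ey).
Qed.

Lemma card_heard_cycle_le2 f u : minimal_dominating_broadcast C f -> #|heard C f u| <= 2.
Proof.
move=> [_ dom min]; apply: (@card_private_arcs_le2 u _ f) => w.
  by rewrite inE /hears dist_cycle => /andP [].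
rewrite inE => /andP [fw _]; have [p heard_p] := private_of_minimal dom (min w fw).
exists p => w'; rewrite inE /hears => /andP [fw' _].
by rewrite -in_set1 -heard_p inE /hears fw' dist_cycle.
Qed.

Lemma card_cycle_ball (v : 'I_n) k :
  k.*2 < n -> k.*2.+1 <= #|[set u : 'I_n | cdist u v <= k]|.
Proof.
move=> lt_2kn; have lt_vn := ltn_ord v; have n_gt0 : 0 < n by lia.
pose a := (v + (n - k)) %% n.
have a_val : (v + (n - k) < n /\ a = v + (n - k)) \/ (n <= v + (n - k) /\ a = v + (n - k) - n).
  by apply: modn_lt_double; lia.
pose g (t : 'I_(k.*2.+1)) : 'I_n := Ordinal (ltn_pmod (a + t) n_gt0).
have g_inj : injective g.
  move=> t1 t2 /(congr1 val) /= /eqP; rewrite eqn_modDl => /eqP.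
  have lt1 := ltn_ord t1; have lt2 := ltn_ord t2.
  by rewrite !modn_small; [move/val_inj | lia | lia].
rewrite -[k.*2.+1]card_ord -(card_imset _ g_inj); apply: subset_leq_card.
apply/subsetP => _ /imsetP [t _ ->]; rewrite inE /cdist /=.
have := ltn_ord t; have := @modn_lt_double (a + t); clearbody a; lia.
Qed.

Lemma cycle_cost_le f :
  minimal_dominating_broadcast C f -> cost f <= maxn n./2 (n./2.*2 - 2).
Proof.
move=> minf; have [bf _ _] := minf.
have f_le v : f v <= n./2 by rewrite -(ecc_cycle v) bf.
have [card_le1 | card_gt1] := leqP #|broadcasters f| 1.
  have := cost_le_card_broadcasters (D := n./2) (fun v _ => f_le v).
  have : #|broadcasters f| * n./2 <= 1 * n./2 by rewrite leq_mul2r card_le1 orbT.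
  lia.
have f_lt : {in broadcasters f, forall v, f v < n./2}.
  move=> v; rewrite inE => fv.
  have : 0 < #|broadcasters f :\ v| by move: card_gt1; rewrite (cardsD1 v) inE fv.
  case/card_gt0P => w; rewrite !inE => /andP [wv fw].
  have vw : v != w by rewrite eq_sym.
  have [u] := minimal_lt_dist minf fv fw vw.
  by rewrite dist_cycle => /leq_trans; apply; apply: cdist_le_half.
have [card_le2 | card_gt2] := leqP #|broadcasters f| 2.
  have f_le_pred : {in broadcasters f, forall v, f v <= n./2.-1}.
    by move=> v /f_lt; lia.
  have := cost_le_card_broadcasters f_le_pred.
  have : #|broadcasters f| * n./2.-1 <= 2 * n./2.-1 by rewrite leq_mul2r card_le2 orbT.
  lia.
have hearers_ge : {in broadcasters f, forall v, (f v).*2.+1 <= #|hearers C f v|}.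
  move=> v vS; have fv_lt := f_lt v vS; move: vS; rewrite inE => fv.
  have -> : hearers C f v = [set u : 'I_n | cdist u v <= f v].
    by apply/setP => u; rewrite !inE /hears fv dist_cycle.
  by apply: card_cycle_ball; lia.
have heard_le2 u := card_heard_cycle_le2 u minf.
by have := cost_add_card_broadcasters_le minf heard_le2 hearers_ge; rewrite card_ord; lia.
Qed.

Lemma cycle_two_broadcasters :
  3 < n -> exists f, minimal_dominating_broadcast C f /\ cost f = n./2.*2 - 2.
Proof.
move=> n_gt3; have lt_0n : 0 < n by lia.
have lt_dn : (odd n).+1 < n by lia.
pose B : {set 'I_n} := [set Ordinal lt_0n; Ordinal lt_dn].
have inB (i : 'I_n) : (i \in B) = (i == 0 :> nat) || (i == (odd n).+1 :> nat).
  by rewrite !inE -!val_eqE.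
pose f (i : 'I_n) := if i \in B then n./2.-1 else 0.
exists f; split; last first.
  by rewrite /cost -big_mkcond sum_nat_const cards2 -val_eqE /=; lia.
apply: minimal_of_boundary_private.
- by move=> v; rewrite ecc_cycle /f; case: ifP => _; lia.
- move=> u; have := ltn_ord u; have [near0|far0] := leqP (cdist u 0) n./2.-1.
    by exists (Ordinal lt_0n); rewrite dist_cycle /f inB eqxx /=; lia.
  exists (Ordinal lt_dn); rewrite dist_cycle /f inB /= eqxx.
  by move: far0; rewrite /cdist; lia.
- move=> v; rewrite /f inB; case: ifP => // vB _; have := ltn_ord v.
  (* at distance n/2 - 1 from v and n/2 from the other broadcaster *)
  have lt_un : (if v == 0 :> nat then n./2 + (odd n).+1 else n./2 + odd n) < n.
    by case: ifP; lia.
  exists (Ordinal lt_un); split; first by rewrite dist_cycle /cdist /=; case: ifP; lia.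
  apply/subsetP => w; have := ltn_ord w.
  rewrite !inE /hears dist_cycle /f inB -val_eqE /cdist /=.
  by case: ifP; case: ifP; lia.
Qed.

End Cycle.

Theorem mainTheorem4 :
  is_upper_broadcast_number (cycle_rel 3) 1 /\
  (forall n : nat, 3 < n ->
     is_upper_broadcast_number (cycle_rel n) (if odd n then n - 3 else n - 2)).
Proof.
split.
  split; last by move=> f /cycle_cost_le.
  have dist_sym (u : 'I_3) : dist (cycle_rel 3) u ord0 = dist (cycle_rel 3) ord0 u.
    by rewrite !dist_cycle cdist_sym.
  have ecc_pos : 0 < ecc (cycle_rel 3) ord0 by rewrite ecc_cycle.
  have [minf costf] := single_broadcast_minimal dist_sym ecc_pos.
  by eexists; split; [exact: minf | rewrite costf ecc_cycle].
move=> n n_gt3.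
have -> : (if odd n then n - 3 else n - 2) = n./2.*2 - 2 by case: ifP; lia.
split; first exact: cycle_two_broadcasters.
by move=> f /cycle_cost_le; lia.
Qed.
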